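(* For integers $d\ge 0$ and $n\ge 0$, let $F_{d,n}=E_\infty(\mu_{d,n})$, where $\mu_{d,n}=\sum_{i=1}^n\delta_{v_{j(i)}}$ for an orthonormal basis $v_1,\dots,v_{d+1}$ of $\mathbf{R}^{d+1}$ and $j(i)\in\{1,\dots,d+1\}$ with $j(i)\equiv i\pmod{d+1}$ (so $F_{d,n}$ equals the number of pairs $1\le i<i'\le n$ with $i\not\equiv i'\pmod{d+1}$). For integers $d\ge1$ and $0\le k\le n$, let $F_{d,n,k}=E_\infty(\nu_{d,n,k})$, where, for a unit vector $p\in\mathbf{R}^{d+1}$ and an orthonormal basis $w_1,\dots,w_d$ of $V=p^\perp$, $\nu_{d,n,k}=(n-k)\delta_p+\sum_{i=1}^k\delta_{w_{j(i)}}$ with $j(i)\in\{1,\dots,d\}$ and $j(i)\equiv i\pmod d$. If $n-1\ge d\ge1$ and $\frac{dn}{d+1}\le k\le n-1$, then $$F_{d,n-k}+F_{d-1,n}<F_{d,n,k},\qquad F_{d,n,k}>F_{d,n,k+1},$$ and moreover $F_{d,n,\lfloor dn/(d+1)\rfloor}=F_{d,n,\lceil dn/(d+1)\rceil}$.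
   Context: Define $\Lambda^\infty(x,y)=1$ if $x\cdot y=0$ and $0$ otherwise, for unit vectors $x,y$, and for a finite nonnegative measure $\mu$ on the unit sphere, $E_\infty(\mu)=\frac12\iint\Lambda^\infty(x,y)\,d\mu(x)\,d\mu(y)$; for $\mu=\sum_i\delta_{x_i}$ this is the number of unordered pairs of indices $\{i,i'\}$ with $x_i\cdot x_{i'}=0$. The quantities $F_{d,n}$ and $F_{d,n,k}$ do not depend on the choice of bases, $p$, by rotation invariance. *)

From mathcomp Require Import all_boot all_order all_algebra.
From mathcomp Require Import reals.
Set Implicit Arguments. Unset Strict Implicit. Unset Printing Implicit Defensive.
Import Order.TTheory GRing.Theory Num.Theory.
Local Open Scope ring_scope.

Definition dotv (R : realType) (m : nat) (x y : 'rV[R]_m) : R :=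
  \sum_(j < m) x 0 j * y 0 j.

(* E_infty of the atomic measure mu = sum_i delta_{pts_i}:
   number of unordered pairs of indices {i,i'} (i < i') with pts_i . pts_i' = 0. *)
Definition Einf (R : realType) (m : nat) (pts : seq 'rV[R]_m) : nat :=
  #|[set ij : 'I_(size pts) * 'I_(size pts) |
       (ij.1 < ij.2)%N && (dotv (nth 0 pts ij.1) (nth 0 pts ij.2) == 0)]|.

Definition ebasis (R : realType) (m : nat) (j : 'I_m) : 'rV[R]_m := delta_mx 0 j.

(* mu_{d,n} = sum_{i=1}^n delta_{v_{j(i)}}, with v = standard basis of R^{d+1},
   v index taken as i mod (d+1) (a relabelling of j(i) in {1..d+1}). *)
Definition mu_pts (R : realType) (d n : nat) : seq 'rV[R]_(d.+1) :=
  [seq ebasis R (inord (i %% d.+1)) | i <- iota 1 n].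

Definition F (R : realType) (d n : nat) : nat := Einf (mu_pts R d n).

(* nu_{d,n,k} = (n-k) delta_p + sum_{i=1}^k delta_{w_{j(i)}} in R^{d+1},
   with p = e_0 and w_1..w_d = e_1..e_d (orthonormal basis of p^perp),
   w index taken as 1 + (i mod d). *)
Definition nu_pts (R : realType) (d n k : nat) : seq 'rV[R]_(d.+1) :=
  nseq (n - k) (ebasis R ord0) ++
  [seq ebasis R (inord (i %% d).+1) | i <- iota 1 k].

Definition Fk (R : realType) (d n k : nat) : nat := Einf (nu_pts R d n k).

From mathcomp Require Import all_boot all_order all_algebra.
From mathcomp Require Import reals.
From mathcomp Require Import zify.
Set Implicit Arguments. Unset Strict Implicit. Unset Printing Implicit Defensive.
Import Order.TTheory GRing.Theory Num.Theory.

(* Of the j indices preceding index j+1, exactly j/d share its residue mod d,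
   so both energies are sums of [j - j/d]:
   F_{c,m} = sum_{j<m} (j - j/(c+1)) and
   F_{d,n,k} = (n-k) k + sum_{j<k} (j - j/d).
   Moving one point from p into V changes F_{d,n,k} by (n-k) - 1 - k/d, which is
   negative once k/d >= n-k, i.e. once (d+1) k >= d n, and vanishes at the
   balanced point k = floor(dn/(d+1)) when d+1 does not divide dn.  The first
   inequality compares the two sides block by block, using k >= d(n-k). *)

Lemma count_mod_eq (d j r : nat) : (0 < d)%N ->
  (\sum_(i < j) ((i + r) %% d == (j + r) %% d))%N = j %/ d.
Proof.
move=> d_gt0; elim: j r => [|j IHj] r; first by rewrite big_ord0 div0n.
rewrite big_ord_recl divnS // -{1}(add0n r) eqn_modDr mod0n eq_sym -(IHj r.+1).
congr addn; apply: eq_bigr => i _.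
by rewrite /= /bump /= add1n !addSnnS.
Qed.

Lemma count_mod_neq (d j : nat) : (0 < d)%N ->
  (\sum_(i < j) (i.+1 %% d != j.+1 %% d))%N = j - j %/ d.
Proof.
move=> d_gt0; rewrite -(count_mod_eq j 1 d_gt0).
have total : (\sum_(i < j) (i.+1 %% d != j.+1 %% d)
           + \sum_(i < j) ((i + 1) %% d == (j + 1) %% d))%N = j.
  rewrite -big_split /=.
  under eq_bigr do rewrite !addn1 addn_negb.
  by rewrite sum_nat_const card_ord muln1.
lia.
Qed.

Section Energies.
Variable R : realType.

Lemma Einf_sum (m : nat) (pts : seq 'rV[R]_m) :
  Einf pts = (\sum_(j < size pts) \sum_(i < j)
                (dotv (nth 0%R pts i) (nth 0%R pts j) == 0%R))%N.
Proof.
set orth := fun i j : nat => dotv (nth 0%R pts i) (nth 0%R pts j) == 0%R.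
rewrite /Einf -sum1_card big_mkcond /=.
transitivity (\sum_(i < size pts) \sum_(j < size pts)
                nat_of_bool ((i < j)%N && orth i j))%N.
  by rewrite pair_big /=; apply: eq_bigr => ij _; rewrite inE; case: ifP.
rewrite exchange_big /=; apply: eq_bigr => j _.
rewrite (big_ord_widen_cond (size pts) xpredT (fun i => nat_of_bool (orth i j)));
  last exact: ltnW.
by rewrite [RHS]big_mkcond; apply: eq_bigr => i _; case: (i < j)%N.
Qed.

Lemma dotv_ebasis_eq0 (m : nat) (a b : 'I_m) :
  (dotv (ebasis R a) (ebasis R b) == 0%R) = (a != b).
Proof.
have -> : dotv (ebasis R a) (ebasis R b) = ((a == b)%:R)%R.
  rewrite /dotv (bigD1 a) //= big1 => [|c /negbTE ca]; last first.
    by rewrite !mxE ca andbF mul0r.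
  by rewrite !mxE !eqxx mul1r addr0.
by case: (a == b); rewrite ?oner_eq0 ?eqxx.
Qed.

Lemma F_sum (c m : nat) : F R c m = (\sum_(j < m) (j - j %/ c.+1))%N.
Proof.
rewrite /F Einf_sum size_map size_iota; apply: eq_bigr => j _.
rewrite -count_mod_neq //; apply: eq_bigr => i _.
have i_lt_m := ltn_trans (ltn_ord i) (ltn_ord j).
rewrite /mu_pts !(nth_map 0%N) ?size_iota // !nth_iota // dotv_ebasis_eq0.
by rewrite -val_eqE /= !inordK ?ltn_pmod // !add1n.
Qed.

Lemma Fk_sum (d n k : nat) : (0 < d)%N ->
  Fk R d n k = ((n - k) * k + \sum_(j < k) (j - j %/ d))%N.
Proof.
move=> d_gt0; set m := n - k.
have nth_p (i : nat) : (i < m)%N -> nth 0%R (nu_pts R d n k) i = ebasis R ord0.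
  by move=> i_lt_m; rewrite nth_cat size_nseq i_lt_m nth_nseq i_lt_m.
have nth_w (i : nat) : (i < k)%N ->
    nth 0%R (nu_pts R d n k) (m + i) = ebasis R (inord (i.+1 %% d).+1).
  move=> i_lt_k; rewrite nth_cat size_nseq ltnNge leq_addr addKn.
  by rewrite (nth_map 0%N) ?size_iota // nth_iota // add1n.
rewrite /Fk Einf_sum size_cat size_nseq size_map size_iota -/m big_split_ord /=.
rewrite big1 => [|j _]; last first.
  apply: big1 => i _; have i_lt_m := ltn_trans (ltn_ord i) (ltn_ord j).
  by rewrite !nth_p // dotv_ebasis_eq0 eqxx.
have -> : (m * k = \sum_(j < k) m)%N by rewrite sum_nat_const card_ord mulnC.
rewrite -big_split /=; apply: eq_bigr => j _.
rewrite big_split_ord /= -count_mod_neq //; congr addn.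
  rewrite -[m in RHS]card_ord -sum1_card; apply: eq_bigr => i _.
  by rewrite nth_p // nth_w // dotv_ebasis_eq0 -val_eqE /= inordK // ltnS ltn_pmod.
apply: eq_bigr => i _; have i_lt_k := ltn_trans (ltn_ord i) (ltn_ord j).
by rewrite !nth_w // dotv_ebasis_eq0 -val_eqE /= !inordK ?ltnS ?ltn_pmod // eqSS.
Qed.

End Energies.

Lemma divnD_pred (a b : nat) : (a + b) %/ b.+1 = (a %/ b.+1 + (0 < a %% b.+1))%N.
Proof.
rewrite {1}(divn_eq a b.+1) -addnA divnMDl //; congr addn.
have := ltn_pmod a (ltn0Sn b); set r := a %% b.+1.
case: (posnP r) => [-> _ | r_gt0 r_le_b]; first by rewrite divn_small.
have -> : (r + b = 1 * b.+1 + r.-1)%N by lia.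
by rewrite divnMDl // divn_small //; lia.
Qed.

Lemma divn_balance (d n : nat) : (0 < d)%N -> (0 < (d * n) %% d.+1)%N ->
  (((d * n) %/ d.+1) %/ d).+1 = n - (d * n) %/ d.+1.
Proof.
move=> d_gt0; have := divn_eq (d * n) d.+1; have := ltn_pmod (d * n) (ltn0Sn d).
set q := (d * n) %/ d.+1; set r := (d * n) %% d.+1 => r_le_d dn_eq r_gt0.
have q_lt_n : (q < n)%N.
  rewrite ltnNge; apply/negP => n_le_q.
  have : (n * d.+1 <= q * d.+1)%N by rewrite leq_mul2r n_le_q orbT.
  by rewrite mulnS mulnC; lia.
set m := n - q.+1.
have q_eq : q = (m * d + (d - r))%N.
  have n_eq : n = (q.+1 + m)%N by rewrite /m; lia.
  by move: dn_eq; rewrite n_eq mulnDr !mulnS [d * q]mulnC [d * m]mulnC; lia.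
rewrite {1}q_eq divnMDl // divn_small ?addn0; lia.
Qed.

Section Comparison.
Variables (R : realType) (d n : nat).
Hypothesis d_gt0 : (0 < d)%N.

Lemma Fk_succ (k : nat) : (k < n)%N ->
  (Fk R d n k.+1 + (k %/ d).+1 = Fk R d n k + (n - k))%N.
Proof.
move=> k_lt_n; rewrite !Fk_sum // big_ord_recr /=.
have := leq_div k d; set S := (\sum_(j < k) _)%N.
have -> : n - k = (n - k.+1).+1 by lia.
by rewrite mulnS mulSn; lia.
Qed.

Lemma F_add_lt_Fk (k : nat) : (k < n)%N -> (d * (n - k) <= k)%N ->
  (F R d (n - k) + F R d.-1 n < Fk R d n k)%N.
Proof.
move=> k_lt_n dm_le_k; rewrite !F_sum prednK // Fk_sum //; set m := n - k.
have m_gt0 : (0 < m)%N by rewrite subn_gt0.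
have k_gt0 : (0 < k)%N by apply: leq_trans dm_le_k; rewrite muln_gt0 d_gt0.
have n_eq : n = (k + m)%N by rewrite /m; lia.
rewrite n_eq big_split_ord /=.
have F_le : (\sum_(j < m) (j - j %/ d.+1) <= \sum_(t < m) (m - t.+1))%N.
  by rewrite (reindex_inj rev_ord_inj) /=; apply: leq_sum => t _; exact: leq_subr.
have blocks : (\sum_(t < m) ((m - t.+1) + ((k + t) - (k + t) %/ d))
               <= \sum_(t < m) (k - 1))%N.
  apply: leq_sum => t _.
  have : (m <= (k + t) %/ d)%N by rewrite leq_divRL // mulnC; lia.
  by have := leq_div (k + t) d; have := ltn_ord t; lia.
rewrite big_split /= sum_nat_const card_ord in blocks.
rewrite addnCA [X in (_ < X)%N]addnC ltn_add2l.
apply: leq_ltn_trans (leq_add F_le (leqnn _)) _; apply: leq_ltn_trans blocks _.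
by rewrite ltn_pmul2l //; lia.
Qed.

End Comparison.

Theorem lemma2p3 (R : realType) (d n : nat) :
  (1 <= d)%N -> (d <= n - 1)%N ->
  (forall k : nat, (d * n <= d.+1 * k)%N -> (k <= n - 1)%N ->
     (F R d (n - k) + F R (d - 1) n < Fk R d n k)%N /\
     (Fk R d n (k + 1) < Fk R d n k)%N) /\
  Fk R d n ((d * n) %/ d.+1) = Fk R d n ((d * n + d) %/ d.+1).
Proof.
move=> d_gt0 d_le_n1; split.
  move=> k dn_le k_le; have k_lt_n : (k < n)%N by lia.
  have dm_le_k : (d * (n - k) <= k)%N by rewrite mulnBr; move: dn_le; rewrite mulSn; lia.
  split; first by rewrite subn1; exact: F_add_lt_Fk.
  have : (n - k <= k %/ d)%N by rewrite leq_divRL // mulnC.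
  by have := Fk_succ R d_gt0 k_lt_n; rewrite addn1; lia.
rewrite divnD_pred; case: (posnP ((d * n) %% d.+1)) => [_ | r_gt0]; first by rewrite addn0.
have := divn_balance d_gt0 r_gt0; set q := (d * n) %/ d.+1 => balance.
apply/eqP; rewrite addn1 -(eqn_add2r (q %/ d).+1) Fk_succ //; last by lia.
by rewrite balance.
Qed.
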